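(* For every integer $N\ge 0$, let $T_{1\times 3}(5,N)$ be the number of tilings of a $5\times n$ rectangle, $n=3N/5$, by $N$ tiles of size $1\times 3$ (and $0$ if $3N/5\notin\mathbb{Z}$). Then, as formal power series, \[ \sum_{N\ge 0} T_{1\times 3}(5,N)\,z^N=\frac{(1-z^5)^2}{1-6z^5+3z^{10}-z^{15}}. \]
   Context: A tiling of an $m\times n$ rectangle (width $m$, length $n$, made of $mn$ unit squares) by $a\times b$ tiles is a partition of the rectangle into non-overlapping axis-parallel $a\times b$ rectangles with integer corner coordinates, each placed in either of its two orientations. Tilings related by reflections or rotations of the rectangle are counted as distinct. The empty tiling counts once for $N=0$. *)

From HB Require Import structures.
From mathcomp Require Import all_boot all_order all_algebra.
Set Implicit Arguments. Unset Strict Implicit. Unset Printing Implicit Defensive.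
Import Order.TTheory GRing.Theory Num.Theory.

(* Cells of an m x n rectangle: row index in 'I_m (width m), column index in 'I_n (length n). *)
Definition cell (m n : nat) := ('I_m * 'I_n)%type.

(* A 1 x 3 tile placed horizontally (3 consecutive cells of a row) or
   vertically (3 consecutive cells of a column), lying inside the rectangle
   (the cardinality condition forces the 3 cells to be inside). *)
Definition is_tile13 (m n : nat) (B : {set cell m n}) : bool :=
  [exists x : cell m n,
     (B == [set y : cell m n | (y.1 == x.1) && (x.2 <= y.2 < x.2 + 3)%N])
  || (B == [set y : cell m n | (y.2 == x.2) && (x.1 <= y.1 < x.1 + 3)%N])]
  && (#|B| == 3%N).

Definition tiling13 (m n : nat) (P : {set {set cell m n}}) : bool :=
  partition P [set: cell m n] && [forall B in P, is_tile13 B].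

Definition ntilings13 (m n N : nat) : nat :=
  #|[set P : {set {set cell m n}} | tiling13 P && (#|P| == N)]|.

Definition T13_5 (N : nat) : nat :=
  if (5 %| 3 * N)%N then ntilings13 5 ((3 * N) %/ 5) N else 0%N.

Local Open Scope ring_scope.
Definition numer13 : {poly int} := (1 - 'X^5) ^+ 2.
Definition denom13 : {poly int} := 1 - 6%:P * 'X^5 + 3%:P * 'X^10 - 'X^15.

From HB Require Import structures.
From mathcomp Require Import all_boot all_order all_algebra.
From mathcomp Require Import zify ring.
Set Implicit Arguments. Unset Strict Implicit. Unset Printing Implicit Defensive.

(* Tile the board column by column.  A partial tiling in which every cell left of column c
   is covered is summarised by its profile: for each row, the number of its cells from
   column c on that are already covered.  Removing the tile that covers the topmost free
   cell of column c (horizontal, or vertical over three free rows) gives a recursion on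
   profiles, so the number of tilings of the 5 x n board is the n-th iterate of a linear
   transfer operator on the 21 profiles reachable from the empty one, evaluated at the
   empty profile.  Linearity propagates the recurrence a(j+9) + 3 a(j+3) = 6 a(j+6) + a(j),
   checked by computation for j = 0 on all 21 profiles, to every j.  As N tiles fill 3N/5
   columns, this is T(N) + 3 T(N-10) = 6 T(N-5) + T(N-15), which together with
   T(0), T(5), T(10) = 1, 4, 22 and T(N) = 0 for 5 not dividing N is the identity. *)

Section Tilings.
Variables (T : finType) (tile : pred {set T}).

Definition tilings (R : {set T}) : {set {set {set T}}} :=
  [set P | partition P R && [forall B in P, tile B]].

Definition ntilings R := #|tilings R|.

Lemma ntilings0 : ntilings set0 = 1.
Proof.
rewrite /ntilings (_ : tilings set0 = [set set0]) ?cards1 //.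
apply/setP => P; rewrite !inE partition_set0.
by case: eqP => [->|] //=; apply/forall_inP => B; rewrite inE.
Qed.

Hypothesis tile_neq0 : forall B, tile B -> B != set0.

Lemma card_tilings_with (R t : {set T}) : tile t -> t \subset R ->
  #|[set P in tilings R | t \in P]| = ntilings (R :\: t).
Proof.
move=> tile_t tR; have t_neq0 := tile_neq0 tile_t.
have R_split : R = t :|: (R :\: t) by rewrite setDE setUIr setUCr setIT (setUidPr tR).
have t_disj : [disjoint t & R :\: t].
  by rewrite disjoints_subset; apply/subsetP => z zt; rewrite !inE zt.
rewrite /ntilings (_ : tilings (R :\: t) = [set P :\ t | P in [set P in tilings R | t \in P]]).
  apply/esym/card_in_imset => P1 P2; rewrite !inE => /andP[_ tP1] /andP[_ tP2] eqP12.
  by rewrite -(setD1K tP1) -(setD1K tP2) eqP12.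
apply/setP => P; rewrite inE; apply/andP/imsetP => [[partP tilesP] | [P']].
  have t_notin : t \notin P.
    apply: contraNN t_neq0 => tP; apply/eqP/setP => z; rewrite inE.
    by apply/negbTE/negP => zt; have := subsetP (partitionS partP tP) z zt; rewrite inE zt.
  exists (t |: P); last by rewrite setU1K.
  rewrite inE setU11 andbT inE {1}R_split partitionU1 //=.
  by apply/forall_inP => B /setU1P[-> //|]; apply: (forall_inP tilesP).
rewrite !inE => /andP[/andP[partP' tilesP'] tP'] ->; split; first exact: partitionD1.
by apply/forall_inP => B /setD1P[_]; apply: (forall_inP tilesP').
Qed.

Lemma ntilings_cover (R : {set T}) x : x \in R ->
  ntilings R = \sum_(t | [&& tile t, x \in t & t \subset R]) ntilings (R :\: t).
Proof.
move=> xR; have card_sum (A : {set {set {set T}}}) : #|A| = \sum_P (P \in A : nat).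
  by rewrite -sum1_card big_mkcond.
under [RHS]eq_bigr => t /and3P[tile_t _ tR] do
  rewrite -(card_tilings_with tile_t tR) card_sum.
rewrite /ntilings card_sum exchange_big /=; apply: eq_bigr => P _.
rewrite -big_mkcondr /=; have [tilingP|] := boolP (P \in tilings R); last first.
  by move=> notP; rewrite big1 // => t /andP[_]; rewrite inE (negbTE notP).
move: (tilingP); rewrite inE => /andP[partP tilesP].
have xP : x \in cover P by rewrite (cover_partition partP).
rewrite (eq_bigl (pred1 (pblock P x))) ?big_pred1_eq // => t /=.
rewrite inE tilingP /= -!andbA; apply/and4P/eqP => [[_ xt _ tP] | ->].
  by rewrite (def_pblock (partition_trivIset partP) tP xt).
have bP := pblock_mem xP; split => //.
- exact: (forall_inP tilesP).
- by rewrite mem_pblock.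
- exact: partitionS partP bP.
Qed.

End Tilings.

Lemma card_ord_range k b w : #|[set j : 'I_k | b <= j < b + w]| = minn (b + w) k - b.
Proof.
have count_range : count (fun j => b <= j < b + w) (iota 0 k) = minn (b + w) k - b.
  elim: k => [|k IH]; first by rewrite minn0.
  by rewrite -addn1 iotaD count_cat IH /= addn0; case: (boolP (b <= k < b + w)) => /=; lia.
rewrite -count_range -val_enum_ord count_map cardsE cardE /enum_mem size_filter -enumT.
by rewrite filter_predT; apply: eq_count => j.
Qed.

Lemma sum_pred2_if (I : finType) (F : I -> nat) (a b : I) (ba bb : bool) :
  (ba -> bb -> a != b) ->
  \sum_(i | ((i == a) && ba) || ((i == b) && bb)) F i =
    (if ba then F a else 0) + (if bb then F b else 0).
Proof.
case: ba bb => [] [] /= neq_ab.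
- rewrite (bigD1 a) ?eqxx //= (eq_bigl (pred1 b)) ?big_pred1_eq // => i /=.
  by case: eqVneq => [->|]; rewrite ?(negbTE (neq_ab isT isT)) ?andbT.
- by rewrite (eq_bigl (pred1 a)) ?big_pred1_eq ?addn0 // => i; rewrite !andbT andbF orbF.
- by rewrite (eq_bigl (pred1 b)) ?big_pred1_eq // => i; rewrite !andbT andbF.
- by rewrite big_pred0 // => i; rewrite !andbF.
Qed.

(* The profiles at column c+1 obtained by covering every free cell of column c, top to
   bottom, by a horizontal tile (which covers 2 cells of the next column) or by a vertical
   tile over three free rows. *)
Fixpoint next_profiles (q : seq nat) : seq (seq nat) :=
  match q with
  | [::] => [:: [::]]
  | v.+1 :: q' => [seq v :: t | t <- next_profiles q']
  | 0 :: q' => [seq 2 :: t | t <- next_profiles q'] ++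
      if q' is [:: 0, 0 & q''] then [seq [:: 0, 0, 0 & t] | t <- next_profiles q''] else [::]
  end.

Lemma size_next_profiles q t : t \in next_profiles q -> size t = size q.
Proof.
have [k] := ubnP (size q); elim: k q t => // k IH [|[|v] q] t //= size_q.
- by rewrite inE => /eqP->.
- rewrite mem_cat => /orP[/mapP[t' t'_in ->] /= | ]; first by rewrite (IH q) //; lia.
  case: q size_q => [|[|a] [|[|b] q]] //= size_q /mapP[t' t'_in ->] /=.
  by rewrite (IH q) //; lia.
- by case/mapP => t' t'_in -> /=; rewrite (IH q) //; lia.
Qed.

Section Board.
Variables m n : nat.
Implicit Types (x : cell m n) (c : nat) (p q : seq nat).
Local Notation tile := (@is_tile13 m n).

Definition hseg x : {set cell m n} :=
  [set y : cell m n | (y.1 == x.1) && (x.2 <= y.2 < x.2 + 3)].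
Definition vseg x : {set cell m n} :=
  [set y : cell m n | (y.2 == x.2) && (x.1 <= y.1 < x.1 + 3)].

Lemma card_hseg x : #|hseg x| = minn (x.2 + 3) n - x.2.
Proof.
rewrite -card_ord_range.
rewrite -(card_imset [set j : 'I_n | x.2 <= j < x.2 + 3] (_ : injective (fun j => (x.1, j)))).
  apply: eq_card => -[a b]; rewrite inE /=; apply/andP/imsetP => [[/eqP -> lim] | [j]].
    by exists b; rewrite ?inE.
  by rewrite inE => lim [-> ->].
by move=> j1 j2 [].
Qed.

Lemma card_vseg x : #|vseg x| = minn (x.1 + 3) m - x.1.
Proof.
rewrite -card_ord_range.
rewrite -(card_imset [set j : 'I_m | x.1 <= j < x.1 + 3] (_ : injective (fun j => (j, x.2)))).
  apply: eq_card => -[a b]; rewrite inE /=; apply/andP/imsetP => [[/eqP -> lim] | [j]].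
    by exists a; rewrite ?inE.
  by rewrite inE => lim [-> ->].
by move=> j1 j2 [].
Qed.

Lemma is_tile13_hseg x : tile (hseg x) = (x.2 + 3 <= n).
Proof.
rewrite /is_tile13 card_hseg (_ : [exists _, _] = true); last first.
  by apply/existsP; exists x; rewrite eqxx.
by apply/eqP/idP; lia.
Qed.

Lemma is_tile13_vseg x : tile (vseg x) = (x.1 + 3 <= m).
Proof.
rewrite /is_tile13 card_vseg (_ : [exists _, _] = true); last first.
  by apply/existsP; exists x; rewrite eqxx orbT.
by apply/eqP/idP; lia.
Qed.

Lemma is_tile13_neq0 B : tile B -> B != set0.
Proof. by case/andP => _ /eqP card3; apply: contra_eqN card3 => /eqP ->; rewrite cards0. Qed.

(* The cells not yet covered when the tiling is complete left of column c and row r is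
   covered up to column c + q_r. *)
Definition region c q : {set cell m n} := [set y : cell m n | c + nth 0 q y.1 <= y.2].

Definition fits c q := all (fun v => c + v <= n) q.

(* A profile sticking out of the board does not come from a tiling; its count is 0. *)
Definition nprofile c q := if fits c q then ntilings tile (region c q) else 0.

Lemma nth_profile p v q i :
  nth 0 (map succn p ++ v :: q) i =
    if i < size p then (nth 0 p i).+1 else if i == size p then v else nth 0 q (i - (size p).+1).
Proof.
rewrite nth_cat size_map; case: ltngtP => [lt | gt | ->]; rewrite ?(nth_map 0) ?subnn //.
by rewrite -subSS subSn.
Qed.

Lemma nth_profile_shift p s k : nth 0 (map succn p ++ s) (size p + k) = nth 0 s k.
Proof. by rewrite nth_cat size_map ltnNge leq_addr addKn. Qed.

Definition two_free q := [&& 1 < size q, nth 0 q 0 == 0 & nth 0 q 1 == 0].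

Lemma two_free_cons2 q : two_free q -> q = [:: 0, 0 & drop 2 q].
Proof. by rewrite /two_free; case: q => [|a [|b q]] //= /andP[/eqP-> /eqP->]; rewrite drop0. Qed.

Section FirstFreeCell.
Variables (c : nat) (p q : seq nat).
Hypotheses (c_lt_n : c < n) (size_pq : size p + (size q).+1 = m).

Let row_lt : size p < m. Proof. by rewrite -size_pq; lia. Qed.
(* In the profile [map succn p ++ 0 :: q] the cell [x] is the topmost free cell of column c. *)
Let x : cell m n := (Ordinal row_lt, Ordinal c_lt_n).
Let Q := map succn p ++ 0 :: q.

Lemma x_in_region : x \in region c Q.
Proof. by rewrite inE nth_profile ltnn eqxx addn0. Qed.

Lemma tile_at_first_free t :
  tile t -> x \in t -> t \subset region c Q -> t = hseg x \/ t = vseg x.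
Proof.
case/andP=> /existsP[[a1 a2] /orP[]] /eqP-> _ xt /subsetP tR; [left | right].
- have /tR : (a1, a2) \in hseg (a1, a2) by rewrite inE eqxx leqnn /=; lia.
  move: xt; rewrite !inE /= -val_eqE /= nth_profile => /andP[/eqP eq1 lim].
  rewrite -eq1 ltnn eqxx addn0 => le_ca.
  have -> : a1 = Ordinal row_lt by apply: val_inj.
  by have -> : a2 = Ordinal c_lt_n by apply: val_inj => /=; lia.
- have /tR : (a1, a2) \in vseg (a1, a2) by rewrite inE eqxx leqnn /=; lia.
  move: xt; rewrite !inE /= -val_eqE /= nth_profile => /andP[/eqP eq2 lim].
  rewrite -eq2; case: ltnP => [_ bad | le_pa _]; first by exfalso; lia.
  have -> : a1 = Ordinal row_lt by apply: val_inj => /=; lia.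
  by have -> : a2 = Ordinal c_lt_n by apply: val_inj.
Qed.

Lemma hseg_sub_region : hseg x \subset region c Q.
Proof.
apply/subsetP => y; rewrite !inE nth_profile => /andP[/eqP -> /andP[le_cy _]] /=.
by rewrite ltnn eqxx addn0.
Qed.

Lemma vseg_tile_region :
  tile (vseg x) && (vseg x \subset region c Q) = two_free q.
Proof.
rewrite is_tile13_vseg /= (_ : size p + 3 <= m = (1 < size q)); last by apply/idP/idP; lia.
rewrite /two_free; case: ltnP => //= q_gt1; apply/subsetP/andP => [sub | [/eqP q0 /eqP q1] y].
  have [lt1 lt2] : size p + 1 < m /\ size p + 2 < m by lia.
  have := sub (Ordinal lt1, Ordinal c_lt_n); have := sub (Ordinal lt2, Ordinal c_lt_n).
  by rewrite !inE /= !nth_profile_shift /= eqxx; lia.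
rewrite !inE nth_profile => /andP[/eqP -> /= /andP[le_py lt_y3]].
rewrite ltnNge le_py /=; case: eqP => [_|ne_yp]; first by rewrite addn0.
have : y.1 - (size p).+1 < 2 by move: ne_yp le_py lt_y3; move: (nat_of_ord y.1) => k; lia.
by case: (_ - _) => [|[|]] //= _; rewrite ?q0 ?q1 addn0.
Qed.

Lemma region_hseg : region c Q :\: hseg x = region c (map succn p ++ 3 :: q).
Proof.
apply/setP => y; rewrite !inE !nth_profile -val_eqE /=.
by case: eqP => [->|_]; rewrite ?ltnn /=; lia.
Qed.

Lemma region_vseg q' : q = [:: 0, 0 & q'] ->
  region c Q :\: vseg x = region c (map succn p ++ [:: 1, 1, 1 & q']).
Proof.
move=> eq_q; apply/setP => y; rewrite !inE !nth_profile eq_q -val_eqE /=.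
move: (nat_of_ord y.1) (nat_of_ord y.2) => i j.
case: (ltnP i (size p)) => [lt_ip | le_pi] /=; first by rewrite andbF.
case: (eqVneq j c) => [-> | /eqP ne_jc] /=;
  (case: ifP => [/eqP eq_i | _]; [lia | case E: (_ - _) => [|[|k]] /=; lia]).
Qed.

Lemma hseg_neq_vseg : c + 3 <= n -> hseg x != vseg x.
Proof.
move=> c3; have lt1 : c.+1 < n by lia.
apply/negP => /eqP/setP/(_ (Ordinal row_lt, Ordinal lt1)); rewrite !inE /= -!val_eqE /=.
by rewrite eqxx leqnSn (gtn_eqF (ltnSn c)) /= addn3 ltnS leqnSn.
Qed.

Lemma ntilings_first_free :
  ntilings tile (region c Q) =
    (if c + 3 <= n then ntilings tile (region c (map succn p ++ 3 :: q)) else 0) +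
    (if two_free q then ntilings tile (region c (map succn p ++ [:: 1, 1, 1 & drop 2 q])) else 0).
Proof.
have x_hseg : x \in hseg x by rewrite inE eqxx leqnn /=; lia.
have x_vseg : x \in vseg x by rewrite inE eqxx leqnn /=; lia.
rewrite (ntilings_cover (@is_tile13_neq0) x_in_region).
rewrite (eq_bigl (fun t => ((t == hseg x) && (c + 3 <= n)) || ((t == vseg x) && two_free q))).
  rewrite sum_pred2_if; last by move=> c3 _; apply: hseg_neq_vseg.
  by rewrite region_hseg; case: (boolP (two_free q)) => // tf; rewrite (region_vseg (two_free_cons2 tf)).
move=> t; apply/and3P/idP => [[tile_t xt tR] | /orP[] /andP[/eqP-> cond]].
- case: (tile_at_first_free tile_t xt tR) => eq_t; move: tile_t tR; rewrite eq_t eqxx.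
    by rewrite is_tile13_hseg => ->.
  by move=> tile_v sub_v; rewrite -vseg_tile_region tile_v sub_v orbT.
- by split; rewrite ?is_tile13_hseg ?hseg_sub_region.
- by move: cond; rewrite -vseg_tile_region => /andP[].
Qed.

Lemma nprofile_first_free :
  nprofile c Q =
    nprofile c (map succn p ++ 3 :: q) +
    (if two_free q then nprofile c (map succn p ++ [:: 1, 1, 1 & drop 2 q]) else 0).
Proof.
rewrite /nprofile ntilings_first_free /fits !all_cat /= addn0 addn1 (ltnW c_lt_n) c_lt_n.
case: (boolP (two_free q)) => [tf|_].
  have -> : all (fun v => c + v <= n) q = all (fun v => c + v <= n) (drop 2 q).
    by rewrite {1}(two_free_cons2 tf) /= addn0 (ltnW c_lt_n).
  by case: (all _ (map _ p)); case: (all _ (drop 2 q)); case: (c + 3 <= n).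
by case: (all _ (map _ p)); case: (all _ q); case: (c + 3 <= n).
Qed.

End FirstFreeCell.

Lemma nprofile_succn c p : size p = m -> nprofile c (map succn p) = nprofile c.+1 p.
Proof.
move=> size_p; rewrite /nprofile /fits all_map.
have -> : region c (map succn p) = region c.+1 p.
  by apply/setP => y; rewrite !inE (nth_map 0) ?size_p // addnS.
by rewrite (eq_all (a2 := fun v => c.+1 + v <= n)) // => v /=; rewrite addnS.
Qed.

Lemma nprofile_next c p q : c < n -> size p + size q = m ->
  nprofile c (map succn p ++ q) = \sum_(t <- next_profiles q) nprofile c.+1 (p ++ t).
Proof.
move=> c_lt_n; have [k] := ubnP (size q); elim: k q p => // k IH q p size_q size_pq.
case: q size_q size_pq => [|[|v] q] /= size_q size_pq.
- by rewrite big_seq1 !cats0 nprofile_succn // -size_pq addn0.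
- rewrite nprofile_first_free // big_cat big_map -cat_rcons -(map_rcons succn p 2).
  rewrite IH; [| lia | by rewrite size_rcons; lia]; congr addn.
    by apply: eq_bigr => t _; rewrite cat_rcons.
  case: q size_q size_pq => [|[|a] [|[|b] q]] //= size_q size_pq; rewrite ?big_nil //.
  rewrite big_map drop0 (_ : [:: 1, 1, 1 & q] = map succn [:: 0; 0; 0] ++ q) // catA -map_cat.
  by rewrite IH; [apply: eq_bigr => t _; rewrite -catA | lia | rewrite size_cat /=; lia].
- rewrite big_map -cat_rcons -(map_rcons succn p v) IH; [| lia | by rewrite size_rcons; lia].
  by apply: eq_bigr => t _; rewrite cat_rcons.
Qed.

Lemma nprofile_end q : nprofile n q = all (pred1 0) q.
Proof.
rewrite /nprofile /fits (eq_all (a2 := pred1 0)) => [|v /=]; last first.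
  by rewrite -{2}(addn0 n) leq_add2l leqn0.
case: ifP => //= _; rewrite -(ntilings0 tile); congr ntilings.
by apply/setP => y; rewrite !inE leqNgt (leq_trans (ltn_ord _) (leq_addr _ _)).
Qed.

End Board.

Definition transfer (f : seq nat -> nat) (q : seq nat) : nat :=
  sumn [seq f t | t <- next_profiles q].

Definition ncompletions d : seq nat -> nat := iter d transfer (fun q => all (pred1 0) q).

Lemma nprofile_ncompletions m n c d q :
  c + d = n -> size q = m -> nprofile m n c q = ncompletions d q.
Proof.
elim: d c q => [|d IH] c q cdn size_q; first by rewrite -cdn addn0 nprofile_end.
have -> : nprofile m n c q = \sum_(t <- next_profiles q) nprofile m n c.+1 t.
  by apply: (@nprofile_next m n c [::] q); [lia | rewrite /= size_q].
rewrite /ncompletions iterS -/(ncompletions d) /transfer sumnE big_map.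
by apply: eq_big_seq => t /size_next_profiles size_t; apply: IH; rewrite ?size_t; lia.
Qed.

Lemma ntilings13_ncompletions m n N :
  3 * N = m * n -> ntilings13 m n N = ncompletions n (nseq m 0).
Proof.
move=> eqN; rewrite -(@nprofile_ncompletions m n 0) ?size_nseq //.
rewrite /nprofile /fits all_nseq orbT /ntilings.
have -> : region m n 0 (nseq m 0) = setT by apply/setP => y; rewrite !inE nth_nseq if_same.
apply: eq_card => P; rewrite !inE andb_idr // => /andP[partP tilesP].
have := card_partition partP; rewrite cardsT card_prod !card_ord.
rewrite (eq_bigr (fun _ => 3)) => [|B /(forall_inP tilesP) /andP[_ /eqP //]].
by rewrite sum_nat_const; lia.
Qed.

Definition profiles5 : seq (seq nat) :=
  [:: [:: 0; 0; 0; 0; 0]; [:: 2; 2; 2; 2; 2]; [:: 2; 2; 0; 0; 0]; [:: 2; 0; 0; 0; 2];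
      [:: 0; 0; 0; 2; 2]; [:: 1; 1; 1; 1; 1]; [:: 1; 1; 2; 2; 2]; [:: 1; 1; 0; 0; 0];
      [:: 1; 2; 2; 2; 1]; [:: 1; 0; 0; 0; 1]; [:: 2; 2; 2; 1; 1]; [:: 0; 0; 0; 1; 1];
      [:: 0; 0; 1; 1; 1]; [:: 0; 0; 2; 2; 2]; [:: 0; 1; 1; 1; 0]; [:: 0; 2; 2; 2; 0];
      [:: 1; 1; 1; 0; 0]; [:: 2; 2; 2; 0; 0]; [:: 2; 2; 1; 1; 1]; [:: 2; 1; 1; 1; 2];
      [:: 1; 1; 1; 2; 2]].

Lemma profiles5_closed : all (fun q => all (mem profiles5) (next_profiles q)) profiles5.
Proof. by vm_compute. Qed.

Lemma ncompletions5_rec0 :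
  all (fun q => ncompletions 9 q + 3 * ncompletions 3 q == 6 * ncompletions 6 q + ncompletions 0 q)
      profiles5.
Proof. by vm_compute. Qed.

Lemma ncompletions5_rec j q : q \in profiles5 ->
  ncompletions (j + 9) q + 3 * ncompletions (j + 3) q =
    6 * ncompletions (j + 6) q + ncompletions j q.
Proof.
elim: j q => [|j IH] q q5; first exact/eqP/(allP ncompletions5_rec0).
rewrite !addSn /ncompletions !iterS -!/(ncompletions _) /transfer !sumnE !big_map.
rewrite !big_distrr -!big_split /=; apply: eq_big_seq => t t_next.
by apply: IH; apply: (allP (allP profiles5_closed q q5)).
Qed.

Lemma T13_5_mul5 k : T13_5 (k * 5) = ncompletions (k * 3) (nseq 5 0).
Proof.
rewrite /T13_5 (_ : 3 * (k * 5) = k * 3 * 5) ?dvdn_mull // ?mulnK //; last lia.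
by apply: ntilings13_ncompletions; lia.
Qed.

Lemma T13_5_eq0 N : ~~ (5 %| N) -> T13_5 N = 0.
Proof. by move=> N5; rewrite /T13_5 Gauss_dvdr // (negbTE N5). Qed.

Lemma T13_5_lt15 N :
  N < 15 -> T13_5 N = nth 0 [:: 1; 0; 0; 0; 0; 4; 0; 0; 0; 0; 22; 0; 0; 0; 0] N.
Proof.
have [/dvdnP[k ->] | N5] := boolP (5 %| N); last first.
  by rewrite T13_5_eq0 //; move: N N5; do 15? case => //.
case: k => [|[|[|k]]] lt15; last by exfalso; lia.
all: by rewrite T13_5_mul5; vm_compute.
Qed.

Lemma T13_5_rec N : 15 <= N ->
  T13_5 N + 3 * T13_5 (N - 10) = 6 * T13_5 (N - 5) + T13_5 (N - 15).
Proof.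
move=> ge15; have [/dvdnP[k eqN] | N5] := boolP (5 %| N); last first.
  have T_sub j : j <= N -> 5 %| j -> T13_5 (N - j) = 0.
    move=> le_jN j5; apply: T13_5_eq0; apply: contra N5.
    by rewrite -{2}(subnK le_jN) dvdn_addl.
  by rewrite T13_5_eq0 // !T_sub //; lia.
subst N.
have [j ->] : exists j, k = j + 3 by exists (k - 3); lia.
have [-> -> ->] : [/\ (j + 3) * 5 - 10 = (j + 1) * 5, (j + 3) * 5 - 5 = (j + 2) * 5
                    & (j + 3) * 5 - 15 = j * 5] by split; lia.
rewrite !T13_5_mul5 !mulnDl; exact: ncompletions5_rec.
Qed.

Import GRing.Theory.
Local Open Scope ring_scope.

Lemma coef_numer13 i : numer13`_i = (i == 0)%:R - 2%:R * (i == 5)%:R + (i == 10)%:R.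
Proof.
have -> : numer13 = 1 - 2%:P * 'X^5 + 'X^10.
  by rewrite /numer13 (_ : 'X^10 = 'X^5 * 'X^5 :> {poly int}) -?exprD //; ring.
by rewrite coefD coefB coefCM coef1 !coefXn.
Qed.

Lemma sum_mul_denom13 (a : nat -> int) N :
  \sum_(k < N.+1) a k * denom13`_(N - k) =
    a N - 6%:R * (if (N < 5)%N then 0 else a (N - 5)%N)
        + 3%:R * (if (N < 10)%N then 0 else a (N - 10)%N)
        - (if (N < 15)%N then 0 else a (N - 15)%N).
Proof.
pose F : {poly int} := \poly_(k < N.+1) a k.
have -> : \sum_(k < N.+1) a k * denom13`_(N - k) = (F * denom13)`_N.
  by rewrite coefM; apply: eq_bigr => k _; rewrite coef_poly ltn_ord.
have -> : F * denom13 = F - 6%:P * ('X^5 * F) + 3%:P * ('X^10 * F) - 'X^15 * F.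
  by rewrite /denom13; ring.
by rewrite !coefB !coefD !coefN !coefCM !coefXnM !coef_poly !ltnS !leq_subr leqnn.
Qed.

Theorem mainTheorem2 :
  forall N : nat,
    \sum_(k < N.+1) ((T13_5 k)%:Z * denom13`_(N - k)) = numer13`_N.
Proof.
move=> N; rewrite (sum_mul_denom13 (fun k => (T13_5 k)%:Z)) coef_numer13.
have [lt15 | ge15] := ltnP N 15.
  rewrite !T13_5_lt15 ?(leq_ltn_trans (leq_subr _ _) lt15) //.
  by move: N lt15; do 15? case => //.
rewrite !ifF ?gtn_eqF; try lia.
by have := T13_5_rec ge15; lia.
Qed.
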